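(* Let $\mathcal G_1$ and $\mathcal G_2$ be digraphs of two dynamic systems. Suppose $\mathcal G_2$ has a single input node $k_2^1$ and is structurally controllable; the structural controllability of $\mathcal G_1$ is unknown. Suppose there exists a directed path starting from some input node $k_1^1$ of $\mathcal G_1$ and ending at $k_2^1$. Form the graph consisting of: - the nodes of this path together with the nodes of $\mathcal G_2$; - the edges of the path together with the edges of $\mathcal G_2$; - a single input at the initial node $k_1^1$ of the path. Then this graph is structurally controllable.
   Context: A directed path is a sequence of edges where each edge's terminal node is the next edge's initial node, with no repeated nodes. For a digraph, $A=[a_{ij}]$ denotes the weight matrix, with $a_{ij}\ne 0$ iff there is an edge from $j$ to $i$; inputs at node $k$ correspond to columns $b\,\bm e_k$ of the input matrix $B$. A graph with designated input nodes is structurally controllable if there is a choice of nonzero values for its edge weights and input gains such that the resulting pair $(A,B)$ is controllable (equivalently, there is a controllable pair with the same zero/nonzero pattern as $(A,B)$). *)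

From HB Require Import structures.
From mathcomp Require Import all_boot all_order all_algebra.
From mathcomp Require Import reals.
Set Implicit Arguments. Unset Strict Implicit. Unset Printing Implicit Defensive.
Import Order.TTheory GRing.Theory Num.Theory.
Local Open Scope ring_scope.

Definition controllable (R : fieldType) (n m : nat)
    (A : 'M[R]_n) (B : 'M[R]_(n, m)) : bool :=
  \rank (\mxrow_(k < n) (A ^+ k *m B)) == n.

(* Nodes are indexed by [enum_val : 'I_#|T| -> T]; input
   columns by [enum_val : 'I_#|I| -> T].  a_ij <> 0 iff edge j -> i; the k-th
   column of B is b e_(node k) with b <> 0.  Weights are real numbers. *)
Definition struct_controllable (R : realType) (T : finType) (e : rel T)
    (I : {set T}) : Prop :=
  exists (A : 'M[R]_#|T|) (B : 'M[R]_(#|T|, #|I|)),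
    [/\ forall i j : 'I_#|T|, (A i j != 0) = e (enum_val j) (enum_val i),
        forall (i : 'I_#|T|) (k : 'I_#|I|),
          (B i k != 0) = (enum_val i == enum_val k)
      & controllable A B].

Definition struct_controllable_on (R : realType) (V : finType) (N : {set V})
    (E : rel V) (I : {set V}) : Prop :=
  @struct_controllable R {x : V | x \in N}
    (fun x y => E (val x) (val y)) [set x | val x \in I].

Definition path_edge (V : eqType) (s : seq V) : rel V :=
  fun x y => (x, y) \in zip s (behead s).

(* Transposed, controllability of a single-input pair means that the orbit
   of the input row under A^T spans the whole space.  Give the path edges
   weight 1 and the edges of G2 the weights of a controllable realisation
   (A2, b2) of G2.  From the unit vector of k1 the orbit walks along the path
   and reaches the unit vector of k2 after |p| steps.  No edge leaves N2, so
   the coordinates of N2 carry a copy of A2^T, and the next |N2| iterates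
   span what the orbit of k2 spans in G2: every unit vector of N2.  Since the
   path meets N2 only in k2, these |p| + |N2| iterates fit within the number
   of nodes, and together they reach every unit vector. *)

From HB Require Import structures.
From mathcomp Require Import all_boot all_order all_algebra.
From mathcomp Require Import reals.
From mathcomp Require Import zify.
Set Implicit Arguments. Unset Strict Implicit. Unset Printing Implicit Defensive.
Import Order.TTheory GRing.Theory Num.Theory.
Local Open Scope ring_scope.

Section Krylov.
Variable F : fieldType.

Definition krylov n (v : 'rV[F]_n) (A : 'M[F]_n) : 'M[F]_n :=
  (\sum_(k < n) <<v *m A ^+ k>>)%MS.

Lemma trmxX n (A : 'M[F]_n) k : (A ^+ k)^T = A^T ^+ k.
Proof.
elim: k => [|k IH]; first by rewrite !expr0 trmx1.
by rewrite exprS exprSr -!mulmxE trmx_mul IH.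
Qed.

Lemma krylov_sup n (v : 'rV[F]_n) (A : 'M[F]_n) t :
  (t < n)%N -> (v *m A ^+ t <= krylov v A)%MS.
Proof. by move=> ltn; apply: (sumsmx_sup (Ordinal ltn)); rewrite ?genmxE. Qed.

Lemma intertwine_exp n m (A : 'M[F]_n) (A' : 'M[F]_m) (P : 'M[F]_(m, n)) k :
  P *m A = A' *m P -> P *m A ^+ k = A' ^+ k *m P.
Proof.
move=> PA; elim: k => [|k IH]; first by rewrite !expr0 mulmx1 mul1mx.
by rewrite !exprSr mulmxA IH -!mulmxA PA.
Qed.

(* [v *m A ^+ (L + j) = w *m A' ^+ j *m P]: past step [L] the orbit of [v]
   is the image under [P] of the orbit of [w]. *)
Lemma krylov_intertwine n m (A : 'M[F]_n) (A' : 'M[F]_m) (P : 'M[F]_(m, n))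
    (v : 'rV_n) (w : 'rV_m) L :
  P *m A = A' *m P -> v *m A ^+ L = w *m P -> (L + m <= n)%N ->
  (1%:M <= krylov w A')%MS -> (P <= krylov v A)%MS.
Proof.
move=> PA vAL Lmn full; rewrite -[P]mul1mx; apply: submx_trans (submxMr P full) _.
rewrite sumsmxMr_gen; apply/sumsmx_subP => j _.
rewrite genmxE (eqmxMr P (genmxE _)).
have -> : w *m A' ^+ j *m P = v *m A ^+ (L + j).
  by rewrite exprD -mulmxE mulmxA vAL -!mulmxA (intertwine_exp _ PA).
by apply: krylov_sup; apply: leq_trans Lmn; rewrite ltn_add2l.
Qed.

Lemma controllable_sumsmx n m (A : 'M[F]_n) (B : 'M[F]_(n, m)) :
  controllable A B = (1%:M <= \sum_(k < n) <<(A ^+ k *m B)^T>>)%MS.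
Proof. by rewrite /controllable -mxrank_tr tr_mxrow (eqmx_col _) sub1mx. Qed.

Lemma controllable_krylov n m (A : 'M[F]_n) (B : 'M[F]_(n, m)) (v : 'rV_n) :
  (B^T :=: v)%MS -> controllable A B = (1%:M <= krylov v A^T)%MS.
Proof.
move=> Bv; rewrite controllable_sumsmx /krylov.
congr (_ <= _)%MS; apply: eq_bigr => k _; apply: eq_genmx.
by rewrite trmx_mul trmxX; apply: eqmxMr.
Qed.

Lemma delta_row_space n m (B : 'M[F]_(n, m)) (i : 'I_n) :
  (0 < m)%N -> (forall r c, (B r c != 0) = (r == i)) ->
  (B^T :=: (delta_mx 0 i : 'rV[F]_n))%MS.
Proof.
move=> m_gt0 Bi.
have rowB c : row c B^T = B i c *: delta_mx 0 i.
  apply/rowP => r; rewrite !mxE; case: (eqVneq r i) => [-> | ne].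
    by rewrite mulr1.
  by rewrite mulr0; apply/eqP; rewrite -[_ == 0]negbK Bi ne.
apply/eqmxP/andP; split.
  by apply/row_subP => c; rewrite rowB scalemx_sub.
have Bic : B i (Ordinal m_gt0) != 0 by rewrite Bi.
rewrite -[delta_mx _ _](scalerK Bic) -rowB.
by apply: scalemx_sub; apply: row_sub.
Qed.

End Krylov.

Section InputMatrix.
Variables (F : fieldType) (T : finType) (I : {set T}).

Definition input_mx : 'M[F]_(#|T|, #|I|) :=
  \matrix_(i, c) (enum_val i == enum_val c)%:R.

Lemma input_mx_support i c : (input_mx i c != 0) = (enum_val i == enum_val c).
Proof.
by rewrite mxE; case: (enum_val i == enum_val c); rewrite ?oner_eq0 ?eqxx.
Qed.

Lemma single_input_row_space (t : T) (B : 'M[F]_(#|T|, #|I|)) :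
  I =i [set t] -> (forall i c, (B i c != 0) = (enum_val i == enum_val c)) ->
  (B^T :=: (delta_mx 0 (enum_rank t) : 'rV[F]_#|T|))%MS.
Proof.
move=> It Bsupp; apply: delta_row_space.
  by apply/card_gt0P; exists t; rewrite It set11.
move=> i c; rewrite Bsupp; have := enum_valP c; rewrite It inE => /eqP ->.
by rewrite -(inj_eq enum_val_inj) enum_rankK.
Qed.

End InputMatrix.

Section SubRank.
Variables (V : finType) (S : {set V}) (d : {x : V | x \in S}).

(* The index of [x] among the nodes in [S]; junk value [enum_rank d] off [S]. *)
Definition sub_rank (x : V) : 'I_#|{: {x : V | x \in S}}| := enum_rank (insubd d x).

Lemma sub_rank_val u : sub_rank (val u) = enum_rank u.
Proof. by rewrite /sub_rank valKd. Qed.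

Lemma sub_rank_enum_val l : sub_rank (val (enum_val l)) = l.
Proof. by rewrite sub_rank_val enum_valK. Qed.

Lemma sub_rankK x : x \in S -> val (enum_val (sub_rank x)) = x.
Proof. by move=> xS; rewrite /sub_rank enum_rankK insubdK. Qed.

Lemma val_enum_val_eq l x : x \in S -> (val (enum_val l) == x) = (l == sub_rank x).
Proof.
by move=> xS; rewrite -{1}(sub_rankK xS) val_eqE (inj_eq enum_val_inj).
Qed.

End SubRank.

Section PathEdge.
Variable V : eqType.

Lemma path_edge_cons (a b : V) s x y :
  path_edge [:: a, b & s] x y = ((x, y) == (a, b)) || path_edge (b :: s) x y.
Proof. by rewrite /path_edge /= in_cons. Qed.

Lemma path_edge_nth (s : seq V) x y x0 : path_edge s x y ->
  exists2 t, (t.+1 < size s)%N & x = nth x0 s t /\ y = nth x0 s t.+1.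
Proof.
elim: s => [|a [|b s] IH] //.
rewrite path_edge_cons => /orP[/eqP [-> ->] | /IH [t ht [-> ->]]].
  by exists 0%N.
by exists t.+1.
Qed.

Lemma path_edge_nth_succ (s : seq V) x0 t : (t.+1 < size s)%N ->
  path_edge s (nth x0 s t) (nth x0 s t.+1).
Proof.
elim: s t => [|a [|b s] IH] // [|t] ht; rewrite path_edge_cons ?eqxx //.
by rewrite IH ?orbT.
Qed.

Lemma path_edge_nthE (s : seq V) x0 t w : uniq s -> (t.+1 < size s)%N ->
  path_edge s (nth x0 s t) w = (w == nth x0 s t.+1).
Proof.
move=> us ht; apply/idP/eqP => [| ->]; last exact: path_edge_nth_succ.
case/(path_edge_nth x0) => t' ht' [nth_tt' ->].
have : nth x0 s t == nth x0 s t' by rewrite nth_tt'.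
by rewrite nth_uniq // ?(ltnW ht) ?(ltnW ht') // => /eqP ->.
Qed.

End PathEdge.

Section Cascade.
Variables (F : fieldType) (V : finType) (N2 : {set V}) (E2 : rel V).
Variables (k1 k2 : V) (p : seq V).
Hypotheses (k2N2 : k2 \in N2) (uniq_path : uniq (k1 :: p)).
Hypotheses (last_path : last k1 p = k2)
  (path_meets_N2 : forall x, x \in k1 :: p -> x \in N2 -> x = k2).

Local Notation s := (k1 :: p).
Local Notation L := (size p).
Let S := [set x in s] :|: N2.
Local Notation node := {x : V | x \in S}.
Local Notation node2 := {x : V | x \in N2}.

Let path_in_S x : x \in s -> x \in S.
Proof. by move=> xs; rewrite in_setU in_set xs. Qed.

Let N2_in_S x : x \in N2 -> x \in S.
Proof. by move=> xN2; rewrite in_setU xN2 orbT. Qed.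

Let d1 : node := exist _ k1 (path_in_S (mem_head k1 p)).
Let d2 : node2 := exist _ k2 k2N2.
Local Notation rank1 := (sub_rank d1).
Local Notation rank2 := (sub_rank d2).
Local Notation e1 := (delta_mx 0 (rank1 k1) : 'rV[F]_#|{: node}|).
Local Notation e2 := (delta_mx 0 (rank2 k2) : 'rV[F]_#|{: node2}|).

Variable A2 : 'M[F]_#|{: node2}|.
Hypothesis A2_support : forall i j,
  (A2 i j != 0) = E2 (val (enum_val j)) (val (enum_val i)).

Definition cascadeA : 'M[F]_#|{: node}| := \matrix_(i, j)
  ((if (val (enum_val i) \in N2) && (val (enum_val j) \in N2)
    then A2 (rank2 (val (enum_val i))) (rank2 (val (enum_val j))) else 0)
   + (path_edge s (val (enum_val j)) (val (enum_val i)))%:R).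

Definition restrict_mx : 'M[F]_(#|{: node2}|, #|{: node}|) :=
  \matrix_(j, i) (val (enum_val i) == val (enum_val j))%:R.

Lemma nth_path_last : nth k1 s L = k2.
Proof. by rewrite -last_path (nth_last k1 s). Qed.

Lemma nth_path_notin_N2 t : (t < L)%N -> nth k1 s t \notin N2.
Proof.
move=> ltL; apply/negP => tN2.
have ts : (t < size s)%N by rewrite ltnS ltnW.
have := path_meets_N2 (mem_nth k1 ts) tN2; rewrite -nth_path_last => /eqP.
by rewrite nth_uniq // => /eqP tL; rewrite tL ltnn in ltL.
Qed.

Lemma nth_path_in_S t : (t <= L)%N -> nth k1 s t \in S.
Proof. by move=> tL; apply/path_in_S/mem_nth; rewrite ltnS. Qed.

Lemma path_edge_notin_N2 x y : path_edge s x y -> x \notin N2.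
Proof.
by case/(path_edge_nth k1) => t ht [-> _]; apply: nth_path_notin_N2.
Qed.

Lemma cascadeA_support i j : (cascadeA i j != 0) =
  path_edge s (val (enum_val j)) (val (enum_val i))
  || [&& E2 (val (enum_val j)) (val (enum_val i)),
         val (enum_val j) \in N2 & val (enum_val i) \in N2].
Proof.
rewrite mxE; case: ifP => [/andP[iN2 jN2] | notN2].
  have -> : path_edge s (val (enum_val j)) (val (enum_val i)) = false.
    by apply/negP => /path_edge_notin_N2; rewrite jN2.
  by rewrite addr0 iN2 jN2 /= andbT A2_support !sub_rankK.
rewrite add0r; case: path_edge; rewrite ?oner_eq0 ?eqxx //=.
by apply/esym/and3P => -[_ jN2 iN2]; rewrite iN2 jN2 in notN2.
Qed.

(* Off [N2], the only out-edge of a path node is the next path edge. *)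
Lemma delta_path_mulA t : (t < L)%N ->
  delta_mx 0 (rank1 (nth k1 s t)) *m cascadeA^T
  = delta_mx 0 (rank1 (nth k1 s t.+1)) :> 'rV[F]_#|{: node}|.
Proof.
move=> ltL; rewrite -rowE; apply/rowP => j; rewrite !mxE.
rewrite sub_rankK ?nth_path_in_S ?(ltnW ltL) // (negbTE (nth_path_notin_N2 ltL)).
by rewrite andbF add0r path_edge_nthE // (val_enum_val_eq d1) ?nth_path_in_S.
Qed.

Lemma cascade_orbit t : (t <= L)%N ->
  e1 *m cascadeA^T ^+ t = delta_mx 0 (rank1 (nth k1 s t)).
Proof.
elim: t => [|t IH] ltL; first by rewrite expr0 mulmx1.
by rewrite exprSr -mulmxE mulmxA IH ?(ltnW ltL) // delta_path_mulA.
Qed.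

Lemma row_restrict_mx j :
  row j restrict_mx = delta_mx 0 (rank1 (val (enum_val j))) :> 'rV[F]_#|{: node}|.
Proof.
apply/rowP => i; rewrite !mxE /=.
by rewrite (val_enum_val_eq d1) ?N2_in_S ?(valP (enum_val j)).
Qed.

Lemma restrict_mx_mulA : restrict_mx *m cascadeA^T = A2^T *m restrict_mx.
Proof.
apply/row_matrixP => j; rewrite !row_mul row_restrict_mx -rowE; apply/rowP => i.
set x := val (enum_val j); set y := val (enum_val i).
have xN2 : x \in N2 := valP (enum_val j).
rewrite !mxE sub_rankK ?N2_in_S // xN2 andbT sub_rank_enum_val.
have -> : path_edge s x y = false.
  by apply/negP => /path_edge_notin_N2; rewrite xN2.
rewrite addr0; case: (boolP (y \in N2)) => yN2.
  rewrite (bigD1 (rank2 y)) //= big1 => [|l /negbTE neq]; rewrite !mxE.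
    by rewrite sub_rankK // eqxx mulr1 addr0.
  by rewrite eq_sym (val_enum_val_eq d2) // neq mulr0.
rewrite big1 // => l _; rewrite !mxE; case: eqP => [yl | _]; last by rewrite mulr0.
by move: yN2; rewrite /y yl (valP (enum_val l)).
Qed.

Lemma card_path_N2 : (L + #|{: node2}| <= #|{: node}|)%N.
Proof.
rewrite !card_sig.
have -> : #|[pred x | x \in S]| = #|S| by apply: eq_card.
have -> : #|[pred x | x \in N2]| = #|N2| by apply: eq_card.
have card_s : #|[set x in s]| = L.+1 by rewrite cardsE (card_uniqP uniq_path).
have meet : (#|[set x in s] :&: N2| <= 1)%N.
  rewrite -(cards1 k2); apply: subset_leq_card; apply/subsetP => x.
  rewrite in_setI in_set => /andP[xs xN2].
  by rewrite (path_meets_N2 xs xN2) in_set1.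
have := cardsU [set x in s] N2; rewrite -/S card_s; lia.
Qed.

Lemma restrict_mx_sub_krylov :
  (1%:M <= krylov e2 A2^T)%MS -> (restrict_mx <= krylov e1 cascadeA^T)%MS.
Proof.
apply: (krylov_intertwine restrict_mx_mulA _ card_path_N2).
by rewrite cascade_orbit // nth_path_last -rowE row_restrict_mx sub_rankK.
Qed.

Lemma cascade_krylov_full :
  (1%:M <= krylov e2 A2^T)%MS -> (1%:M <= krylov e1 cascadeA^T)%MS.
Proof.
move=> full2; apply/row_subP => i; rewrite row1 -[i](sub_rank_enum_val d1).
have : val (enum_val i) \in S := valP (enum_val i).
set x := val (enum_val i) => xS.
have [xN2 | xN2'] := boolP (x \in N2).
  apply: submx_trans (restrict_mx_sub_krylov full2).
  by rewrite -(sub_rankK d2 xN2) -row_restrict_mx row_sub.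
have xs : x \in s by move: xS; rewrite in_setU in_set (negbTE xN2') orbF.
have ltL : (index x s < L)%N.
  have : (index x s <= L)%N by rewrite -ltnS index_mem.
  rewrite leq_eqVlt => /orP[/eqP xL | //].
  by move: xN2'; rewrite -(nth_index k1 xs) xL nth_path_last k2N2.
rewrite -(nth_index k1 xs) -cascade_orbit ?(ltnW ltL) //; apply: krylov_sup.
exact: leq_trans ltL (leq_trans (leq_addr _ _) card_path_N2).
Qed.

Variable B2 : 'M[F]_(#|{: node2}|, #|[set u : node2 | val u \in [set k2]]|).
Hypothesis B2_support : forall i c, (B2 i c != 0) = (enum_val i == enum_val c).

Lemma cascade_controllable : controllable A2 B2 ->
  controllable cascadeA (input_mx F [set u : node | val u \in [set k1]]).
Proof.
have input1 := @input_mx_support F _ [set u : node | val u \in [set k1]].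
rewrite (controllable_krylov _ (single_input_row_space (t := d2) _ B2_support));
  last by move=> u; rewrite !inE -val_eqE.
rewrite (controllable_krylov _ (single_input_row_space (t := d1) _ input1));
  last by move=> u; rewrite !inE -val_eqE.
rewrite -(sub_rank_val d2) -(sub_rank_val d1); exact: cascade_krylov_full.
Qed.

End Cascade.

Theorem theorem5 (R : realType) (V : finType) (E : rel V)
    (N1 : {set V}) (E1 : rel V) (I1 : {set V})
    (N2 : {set V}) (E2 : rel V) (k2 : V)
    (k1 : V) (p : seq V) :
  I1 \subset N1 ->
  k2 \in N2 ->
  struct_controllable_on R N2 E2 [set k2] ->
  k1 \in I1 ->
  path E k1 p ->
  uniq (k1 :: p) ->
  last k1 p = k2 ->
  (forall x, x \in k1 :: p -> x \in N2 -> x = k2) ->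
  struct_controllable_on R ([set x in k1 :: p] :|: N2)
    (fun x y => path_edge (k1 :: p) x y || [&& E2 x y, x \in N2 & y \in N2])
    [set k1].
Proof.
(* Neither G1 nor the edges [E] enter: the witness lives on the path and G2. *)
move=> _ k2N2 [A2 [B2 [A2_support B2_support ctrl2]]] _ _ uniq_path last_path meets.
exists (cascadeA k1 p k2N2 A2), (input_mx R _); split.
- exact: cascadeA_support.
- exact: input_mx_support.
- exact: cascade_controllable.
Qed.
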